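(* Let $i,j,m\in\mathbb{N}$, and let $A=(a_0,\dots,a_i)$ and $B=(b_0,\dots,b_j)$ be finite sequences of positive integers satisfying $m[a_i,\dots,a_0]=[b_0,\dots,b_j]$. Then the concatenation $BA=(b_0,\dots,b_j,a_0,\dots,a_i)$ is an $m$-palindrome if and only if $m[a_i,\dots,a_1]=[b_0,\dots,b_{j-1}]$.
   Context: For a finite sequence $(c_0,\dots,c_k)$ of positive integers, $[c_0,\dots,c_k]$ denotes the value of the finite continued fraction $c_0+\cfrac{1}{c_1+\cfrac{1}{\ddots+\cfrac{1}{c_k}}}$. A finite sequence $(c_0,\dots,c_k)$ of positive integers is an $m$-palindrome ($m\in\mathbb{N}$) if $[c_0,\dots,c_k]=m\,[c_k,\dots,c_0]$. *)

From mathcomp Require Import all_boot all_order all_algebra.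
Set Implicit Arguments. Unset Strict Implicit. Unset Printing Implicit Defensive.
Import Order.TTheory GRing.Theory Num.Theory.
Local Open Scope ring_scope.

(* Value of a finite continued fraction [c_0, ..., c_k] over the rationals.
   Intended for non-empty sequences; [cf [::]] is a dummy value 0. *)
Fixpoint cf (s : seq nat) : rat :=
  match s with
  | [::] => 0
  | [:: c] => c%:R
  | c :: s' => c%:R + (cf s')^-1
  end.

(* Extended value: the empty continued fraction has value infinity (None),
   following the convergent convention p_{-1}/q_{-1} = 1/0. *)
Definition cf_ext (s : seq nat) : option rat :=
  if s is [::] then None else Some (cf s).

Definition scaled_eq (m : nat) (x y : option rat) : Prop :=
  match x, y with
  | Some x, Some y => m%:R * x = y
  | None, None => True
  | _, _ => False
  end.

Definition m_palindrome (m : nat) (s : seq nat) : Prop :=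
  cf s = m%:R * cf (rev s).

From mathcomp Require Import all_boot all_order all_algebra.
From mathcomp Require Import ring lra.
Set Implicit Arguments. Unset Strict Implicit. Unset Printing Implicit Defensive.
Import Order.TTheory GRing.Theory Num.Theory.
Local Open Scope ring_scope.

(* Write M(s) = prod_k [[c_k, 1], [1, 0]] for the continuant matrix of s, so
   that [s] = M(s)_11 / M(s)_21, the matrix of rev s is the transpose of M(s)
   and M(B ++ A) = M(B) M(A).  Then s is an m-palindrome iff
   M(s)_12 = m M(s)_21.  Expanding this for s = B ++ A and cancelling the
   contribution of the hypothesis m [rev A] = [B] leaves the identity
   M(B)_12 M(A)_22 = m M(B)_22 M(A)_21, whose entries are the continuants of
   (b_0, ..., b_(j-1)) and (a_i, ..., a_1); a convergent-type cross
   multiplication turns it into the stated equation, the empty sequences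
   corresponding to the column (1, 0), i.e. to the value infinity. *)

Record mat2 := Mat2 { m11 : rat; m12 : rat; m21 : rat; m22 : rat }.

Definition mat2_one := Mat2 1 0 0 1.

Definition mat2_mul (X Y : mat2) :=
  Mat2 (m11 X * m11 Y + m12 X * m21 Y) (m11 X * m12 Y + m12 X * m22 Y)
       (m21 X * m11 Y + m22 X * m21 Y) (m21 X * m12 Y + m22 X * m22 Y).

Definition mat2_tr (X : mat2) := Mat2 (m11 X) (m21 X) (m12 X) (m22 X).

Lemma mat2_mul1 X : mat2_mul mat2_one X = X.
Proof. by case: X => a b c d; rewrite /mat2_mul /=; congr Mat2; ring. Qed.

Lemma mat2_mulA X Y Z : mat2_mul X (mat2_mul Y Z) = mat2_mul (mat2_mul X Y) Z.
Proof.
by case: X Y Z => [? ? ? ?] [? ? ? ?] [? ? ? ?]; rewrite /mat2_mul /=; congr Mat2; ring.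
Qed.

Lemma mat2_mul12E (m : rat) X Y : m11 X * m12 Y = m * m21 X * m11 Y ->
  m12 (mat2_mul X Y) = m * m21 (mat2_mul X Y) <->
  m12 X * m22 Y = m * m22 X * m21 Y.
Proof.
move=> XY_balanced.
have defect : m12 (mat2_mul X Y) - m * m21 (mat2_mul X Y) =
              m12 X * m22 Y - m * m22 X * m21 Y.
  by rewrite /= XY_balanced; ring.
split => E; apply/eqP; rewrite -subr_eq0 ?defect ?E ?subrr //.
by rewrite -defect E subrr.
Qed.

Definition positive_seq (s : seq nat) := all (fun c => 0 < c)%N s.

Lemma positive_seq_rev s : positive_seq (rev s) = positive_seq s.
Proof. exact: all_rev. Qed.

Lemma rev_neq0 (T : eqType) (s : seq T) : (rev s != [::]) = (s != [::]).
Proof. by rewrite -!nilpE rev_nilp. Qed.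

Definition partial_quotient (c : nat) := Mat2 c%:R 1 1 0.

Fixpoint cmat (s : seq nat) : mat2 :=
  if s is c :: s' then mat2_mul (partial_quotient c) (cmat s') else mat2_one.

Lemma cmat_cat s t : cmat (s ++ t) = mat2_mul (cmat s) (cmat t).
Proof. by elim: s => [|c s IH] /=; rewrite ?mat2_mul1 // IH mat2_mulA. Qed.

Lemma cmat_rev s : cmat (rev s) = mat2_tr (cmat s).
Proof.
elim: s => [|c s IH] //; rewrite rev_cons -cats1 cmat_cat IH /=.
by case: (cmat s) => a b c' d; rewrite /mat2_mul /mat2_tr /=; congr Mat2; ring.
Qed.

Lemma cmat_cons c s :
  cmat (c :: s) = Mat2 (c%:R * m11 (cmat s) + m21 (cmat s))
                       (c%:R * m12 (cmat s) + m22 (cmat s))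
                       (m11 (cmat s)) (m12 (cmat s)).
Proof. by rewrite /= /mat2_mul /=; congr Mat2; ring. Qed.

Lemma cmat_rcons s c :
  cmat (rcons s c) = Mat2 (c%:R * m11 (cmat s) + m12 (cmat s)) (m11 (cmat s))
                          (c%:R * m21 (cmat s) + m22 (cmat s)) (m21 (cmat s)).
Proof.
by rewrite -cats1 cmat_cat /= /mat2_mul /=; congr Mat2; ring.
Qed.

Lemma cmat_ge0 s : positive_seq s ->
  [/\ 0 < m11 (cmat s), 0 <= m12 (cmat s), 0 <= m21 (cmat s) & 0 <= m22 (cmat s)].
Proof.
elim: s => [|c s IH]; first by rewrite /= ltr01 lexx ler01.
case/andP=> c_gt0 /IH[? ? ? ?]; rewrite cmat_cons /=.
have : 0 < (c%:R : rat) by rewrite ltr0n.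
by split=> //; [nra | nra | exact: ltW].
Qed.

Lemma cmat21_gt0 s : positive_seq s -> s != [::] -> 0 < m21 (cmat s).
Proof. by case: s => // c s /andP[_ /cmat_ge0[]]; rewrite cmat_cons. Qed.

Lemma cmat12_gt0 s : positive_seq s -> s != [::] -> 0 < m12 (cmat s).
Proof.
move=> s_pos s_neq0; rewrite -[m12 _]/(m21 (mat2_tr (cmat s))) -cmat_rev.
by apply: cmat21_gt0; rewrite ?positive_seq_rev ?rev_neq0.
Qed.

Lemma cf_cons c s : s != [::] -> cf (c :: s) = c%:R + (cf s)^-1.
Proof. by case: s. Qed.

Lemma cf_cmat s : positive_seq s -> s != [::] -> cf s = m11 (cmat s) / m21 (cmat s).
Proof.
elim: s => [|c s IH] // /andP[_ s_pos] _.
have [-> | s_neq0] := eqVneq s [::]; first by rewrite /= /mat2_mul /=; field.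
have [num_gt0 _ _ _] := cmat_ge0 s_pos; have den_gt0 := cmat21_gt0 s_pos s_neq0.
rewrite cf_cons // IH // cmat_cons invf_div /=.
by field; rewrite !gt_eqF.
Qed.

Lemma cf_gt0 s : positive_seq s -> s != [::] -> 0 < cf s.
Proof.
move=> s_pos s_neq0; have [num_gt0 _ _ _] := cmat_ge0 s_pos.
by rewrite cf_cmat // divr_gt0 // cmat21_gt0.
Qed.

Lemma cf_rev_cmat s :
  positive_seq s -> s != [::] -> cf (rev s) = m11 (cmat s) / m12 (cmat s).
Proof.
move=> s_pos s_neq0.
by rewrite cf_cmat ?cmat_rev ?positive_seq_rev ?rev_neq0.
Qed.

Lemma m_palindromeE m s : positive_seq s -> s != [::] ->
  m_palindrome m s <-> m12 (cmat s) = m%:R * m21 (cmat s).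
Proof.
move=> s_pos s_neq0; have [num_gt0 _ _ _] := cmat_ge0 s_pos.
have den_neq0 := lt0r_neq0 (cmat21_gt0 s_pos s_neq0).
have rden_neq0 := lt0r_neq0 (cmat12_gt0 s_pos s_neq0).
rewrite /m_palindrome cf_cmat // cf_rev_cmat // mulrA; split => [/eqP | E].
  rewrite eqr_div // => /eqP E; apply: (mulfI (lt0r_neq0 num_gt0)).
  by rewrite mulrCA mulrA -E mulrC.
by apply/eqP; rewrite eqr_div // E; apply/eqP; ring.
Qed.

Lemma cf_ext_neq0 s : s != [::] -> cf_ext s = Some (cf s).
Proof. by case: s. Qed.

Lemma scaled_eq_cf_ext m s t : m != 0%N -> positive_seq s -> positive_seq t ->
  scaled_eq m (cf_ext s) (cf_ext t) <->
  m11 (cmat t) * m21 (cmat s) = m%:R * m21 (cmat t) * m11 (cmat s).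
Proof.
move=> m_neq0 s_pos t_pos.
have [-> | s_neq0] := eqVneq s [::]; have [-> | t_neq0] := eqVneq t [::].
- by rewrite /= !(mulr0, mul0r).
- rewrite (cf_ext_neq0 t_neq0) /= mulr0 mulr1; split => // /esym/eqP.
  by rewrite mulf_eq0 pnatr_eq0 (negbTE m_neq0) gt_eqF // cmat21_gt0.
- rewrite (cf_ext_neq0 s_neq0) /= mulr0 mul0r mul1r; split => // E.
  by have := cmat21_gt0 s_pos s_neq0; rewrite E ltxx.
have den_s := lt0r_neq0 (cmat21_gt0 s_pos s_neq0).
have den_t := lt0r_neq0 (cmat21_gt0 t_pos t_neq0).
rewrite !cf_ext_neq0 //= !cf_cmat // mulrA; split => [/eqP | E].
  by rewrite eqr_div // => /eqP <-; ring.
by apply/eqP; rewrite eqr_div // E; apply/eqP; ring.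
Qed.

Theorem lemma3p4 (i j m : nat) (A B : seq nat) :
  size A = i.+1 -> size B = j.+1 ->
  all (fun c => 0 < c)%N A -> all (fun c => 0 < c)%N B ->
  m%:R * cf (rev A) = cf B ->
  (m_palindrome m (B ++ A) <->
   scaled_eq m (cf_ext (rev (behead A))) (cf_ext (take j B))).
Proof.
case: A => [|a A] // _; case/lastP: B => [|B b] // size_B A_pos B_pos balanced.
have -> : take j (rcons B b) = B.
  by rewrite -cats1 take_size_cat //; move: size_B; rewrite size_rcons => -[].
have rB_neq0 : rcons B b != [::] by case: B {size_B B_pos balanced}.
have m_neq0 : m != 0%N.
  apply: contraTneq (cf_gt0 B_pos rB_neq0) => m0.
  by rewrite -balanced m0 mul0r ltxx.
have {}balanced : m11 (cmat (rcons B b)) * m12 (cmat (a :: A)) =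
                  m%:R * m21 (cmat (rcons B b)) * m11 (cmat (a :: A)).
  have := @scaled_eq_cf_ext m (rev (a :: A)) (rcons B b) m_neq0.
  rewrite !cf_ext_neq0 ?rev_neq0 ?positive_seq_rev // cmat_rev.
  by move=> /(_ A_pos B_pos)[+ _]; apply.
have BA_pos : positive_seq (rcons B b ++ a :: A) by rewrite /positive_seq all_cat B_pos.
rewrite m_palindromeE //; last by case: (rcons B b).
move: A_pos B_pos; rewrite /positive_seq all_rcons /= => /andP[_ A_pos] /andP[_ B_pos].
rewrite cmat_cat (mat2_mul12E balanced) scaled_eq_cf_ext ?positive_seq_rev //.
by rewrite cmat_rcons cmat_cons cmat_rev.
Qed.
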